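(* For every institution $s$, the aggregate choice rule $\mathcal{C}^h_s$ is fair: for every $Y\subseteq X$ and every $x\in Y_s$ with $\mathbf{i}(x)\notin\mathbf{i}(\mathcal{C}^h_s(Y))$, every $y\in\mathcal{C}^h_s(Y)$ satisfies at least one of: (1) $\mathbf{i}(y)\succ_{s}\mathbf{i}(x)$; (2) $\mathbf{t}(x)\neq\mathbf{t}(y)$; (3) $\rho(\mathbf{i}(y))\setminus\rho(\mathbf{i}(x))\neq\emptyset$.
   Context: Model. $I$ finite set of individuals, $S$ finite set of institutions. Reserve categories $R=\{SC,ST,OBC,EWS\}$, position types $V=\{o\}\cup R$ ($o$ = open category). Institution $s$ has $q_s^r$ positions reserved for $r\in R$ and $q_s^o$ open positions. Individual $i$ has vertical membership $t(i)\in R\cup\{g\}$ ($g$ = general). Institution $s$ has a strict merit ranking $\succ_s$ of $I$. Contracts $X$: triples $(i,s,v)$ with $v=o$, or $v=t(i)$ if $t(i)\in R$; $\mathbf{i}(x),\mathbf{s}(x),\mathbf{t}(x)$ denote individual, institution, category; $Y_s=\{x\in Y:\mathbf{s}(x)=s\}$, $\mathbf{i}(Y)=\{\mathbf{i}(x):x\in Y\}$. $H=\{h_1,\dots,h_L\}$ horizontal types, $\rho(i)\subseteq H$ types of $i$, $\rho^{-1}(h)=\{i:h\in\rho(i)\}$; hierarchical: if $\rho^{-1}(h)\cap\rho^{-1}(h')\neq\emptyset$ then one of $\rho^{-1}(h),\rho^{-1}(h')$ is a strict subset of the other ($h$ contains $h'$ if $\rho^{-1}(h')\subsetneq\rho^{-1}(h)$).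 For each $s$ and $v\in V$, $\kappa^s_v=(\kappa^s_{v,j})_{j}\in\mathbb{Z}_+^L$ are horizontal reservations within category $v$ at $s$; a chosen individual counts against every type she has. Hierarchical choice rule $C^h(A,\kappa,\rho)$ with capacity $q$ and ranking $\succ$: Step 1: let $H^1$ be the types containing no other type. If no individual in $A$ has a horizontal type, choose the $\min(q,|A|)$ highest-ranked and stop. Otherwise for each $h_j\in H^1$ (in a fixed order, not exceeding remaining positions) choose all not-yet-chosen type-$h_j$ individuals of $A$ if at most $\kappa_j$, else the $\kappa_j$ highest-ranked; reduce remaining positions and the reservation of each type containing $h_j$ by the number chosen (floored at 0); remove $h_j$. Step $n\ge2$: stop if no positions or individuals remain; if no type remains, fill remaining positions with the highest-ranked remaining individuals and stop; otherwise process the remaining types containing no other remaining type as in Step 1 with updated reservations. Output: all individuals chosen. Aggregate choice rule $\mathcal{C}^h_s$: given $Y\subseteq X$, categories are processed in the order $o,SC,ST,OBC,EWS$. For category $v$, let $A_v$ be the set of individuals who have a contract $(i,s,v)\in Y$ and who were not chosen by any earlier category; apply $C^h(A_v,\kappa^s_v,\rho)$ with capacity $q_s^v$ and ranking $\succ_s$, and select the contracts $(i,s,v)$ of the chosen individuals. $\mathcal{C}^h_s(Y)$ is the union of the selected contracts over all categories. *)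

From HB Require Import structures.
From mathcomp Require Import all_boot all_order.
Set Implicit Arguments. Unset Strict Implicit. Unset Printing Implicit Defensive.

Inductive rcat := SC | ST | OBC | EWS.
Inductive pos := Open | Res of rcat.

Definition pos_to_ord (v : pos) : 'I_5 :=
  match v with
  | Open => inord 0 | Res SC => inord 1 | Res ST => inord 2
  | Res OBC => inord 3 | Res EWS => inord 4 end.
Definition ord_to_pos (k : 'I_5) : pos :=
  match val k with
  | 0 => Open | 1 => Res SC | 2 => Res ST | 3 => Res OBC | _ => Res EWS end.
Lemma pos_to_ordK : cancel pos_to_ord ord_to_pos.
Proof. by case=> [|[]]; rewrite /ord_to_pos /= inordK. Qed.
HB.instance Definition _ := Equality.copy pos (can_type pos_to_ordK).
HB.instance Definition _ := Choice.copy pos (can_type pos_to_ordK).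
HB.instance Definition _ := Countable.copy pos (can_type pos_to_ordK).
HB.instance Definition _ := Finite.copy pos (can_type pos_to_ordK).

(* A strict (total) merit ranking: [succ a b] means "a is ranked above b". *)
Definition strict_ranking (I : finType) (succ : rel I) : Prop :=
  [/\ irreflexive succ, transitive succ &
      forall a b, a != b -> succ a b || succ b a].

(* The k highest-ranked members of A (all of A if |A| <= k). *)
Definition top (I : finType) (succ : rel I) (k : nat) (A : {set I}) : {set I} :=
  [set i in A | #|[set j in A | succ j i]| < k].

Section Horizontal.
Variables (I : finType) (n : nat) (rho : I -> {set 'I_n}).

Definition tinv (h : 'I_n) : {set I} := [set i | h \in rho i].
Definition hcontains (h h' : 'I_n) : bool := tinv h' \proper tinv h.

Definition hierarchical : Prop :=
  forall h h' : 'I_n, h != h' -> tinv h :&: tinv h' != set0 ->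
    tinv h \proper tinv h' \/ tinv h' \proper tinv h.

Variables (succ : rel I) (A : {set I}).

(* state: (chosen individuals, remaining positions, current reservations) *)
Definition hstate := ({set I} * nat * ('I_n -> nat))%type.

Definition proc_type (st : hstate) (h : 'I_n) : hstate :=
  let: (ch, r, kap) := st in
  let avail := [set i in A | (h \in rho i) && (i \notin ch)] in
  let new := top succ (minn (kap h) r) avail in
  let m := #|new| in
  (ch :|: new, r - m,
   fun h' => if hcontains h' h then kap h' - m else kap h').

Fixpoint hsteps (fuel : nat) (st : hstate) (R : {set 'I_n}) : {set I} :=
  match fuel with
  | 0 => st.1.1
  | fuel'.+1 =>
    let: (ch, r, kap) := st in
    if (r == 0) || (A :\: ch == set0) then ch
    else if R == set0 then ch :|: top succ r (A :\: ch)
    else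
      let M := [set h in R | [forall h' in R, ~~ hcontains h h']] in
      hsteps fuel' (foldl proc_type st (enum M)) (R :\: M)
  end.

Definition hchoice (q : nat) (kappa : 'I_n -> nat) : {set I} :=
  if [forall i in A, rho i == set0] then top succ q A
  else hsteps n.+2 (set0, q, kappa) setT.

End Horizontal.

Section Aggregate.
Variables (I S : finType) (n : nat) (t : I -> option rcat)
  (rho : I -> {set 'I_n}) (succ : S -> rel I)
  (q : S -> pos -> nat) (kappa : S -> pos -> 'I_n -> nat).

Definition contract := (I * S * pos)%type.
Definition ci (x : contract) : I := x.1.1.
Definition cs (x : contract) : S := x.1.2.
Definition ct (x : contract) : pos := x.2.

Definition contractX : {set contract} :=
  [set x : contract | (ct x == Open) ||
     match t (ci x) with Some r => ct x == Res r | None => false end].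

Definition cat_order : seq pos := [:: Open; Res SC; Res ST; Res OBC; Res EWS].

Definition agg_step (s : S) (Y : {set contract})
    (st : {set I} * {set contract}) (v : pos) : {set I} * {set contract} :=
  let: (chI, chX) := st in
  let Av := [set i | ((i, s, v) \in Y) && (i \notin chI)] in
  let C := hchoice rho (succ s) Av (q s v) (kappa s v) in
  (chI :|: C, chX :|: [set ((i, s, v) : contract) | i in C]).

Definition Cagg (s : S) (Y : {set contract}) : {set contract} :=
  (foldl (agg_step s Y) (set0, set0) cat_order).2.

End Aggregate.

From HB Require Import structures.
From mathcomp Require Import all_boot all_order.
Set Implicit Arguments. Unset Strict Implicit. Unset Printing Implicit Defensive.

(* Every step of both choice rules adds to the already chosen set the top-k
   members of a pool that is closed upwards under "higher merit and no fewer
   horizontal types" among the not-yet-chosen candidates.  Hence if a is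
   rejected and b is chosen with a above b and rho b included in rho a, then b
   cannot have been added by any step, a contradiction.  The argument uses
   only transitivity and totality of the ranking, not the hierarchical
   structure of the types. *)

Lemma foldl_ind (T U : Type) (P : T -> Prop) (f : T -> U -> T) (x : T) (us : seq U) :
  P x -> (forall y u, P y -> P (f y u)) -> P (foldl f x us).
Proof. by elim: us x => [|u us IH] x //= Px Pf; apply: IH => //; apply: Pf. Qed.

Lemma top_subset (I : finType) (succ : rel I) k (B : {set I}) :
  top succ k B \subset B.
Proof. by apply/subsetP=> i; rewrite inE => /andP[]. Qed.

Lemma top_succ_closed (I : finType) (succ : rel I) k (B : {set I}) a b :
  transitive succ -> a \in B -> b \in top succ k B -> succ a b ->
  a \in top succ k B.
Proof.
move=> succ_tr aB; rewrite !inE => /andP[bB b_top] ab; rewrite aB /=.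
apply: leq_ltn_trans b_top; apply: subset_leq_card; apply/subsetP=> j.
by rewrite !inE => /andP[-> ja]; apply: succ_tr ja ab.
Qed.

Section HierarchicalChoice.
Variables (I : finType) (n : nat) (rho : I -> {set 'I_n}) (succ : rel I).
Variable A : {set I}.
Hypothesis succ_tr : transitive succ.

Definition fair_growth (ch ch' : {set I}) : Prop :=
  ch \subset ch' /\
  forall a b, a \in A -> a \notin ch' -> b \in ch' -> succ a b ->
    rho b \subset rho a -> b \in ch.

Lemma fair_growth_refl ch : fair_growth ch ch.
Proof. by split. Qed.

Lemma fair_growth_trans ch1 ch2 ch3 :
  fair_growth ch1 ch2 -> fair_growth ch2 ch3 -> fair_growth ch1 ch3.
Proof.
move=> [sub12 fair12] [sub23 fair23]; split; first exact: subset_trans sub23.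
move=> a b aA a3 b3 ab ba; apply: (fair12 a b) => //; last exact: (fair23 a b).
by apply: contra a3; apply: (subsetP sub23).
Qed.

Lemma fair_growth_add_top (ch B : {set I}) k :
  (forall a b, a \in A -> a \notin ch -> b \in B -> succ a b ->
     rho b \subset rho a -> a \in B) ->
  fair_growth ch (ch :|: top succ k B).
Proof.
move=> B_closed; split=> [|a b aA]; first exact: subsetUl.
rewrite !in_setU negb_or => /andP[a_ch a_top] /orP[// | b_top] ab ba.
have bB : b \in B := subsetP (top_subset succ k B) b b_top.
by rewrite (top_succ_closed _ (B_closed _ _ aA a_ch bB ab ba) b_top ab) in a_top.
Qed.

Lemma fair_growth_proc_type (st : hstate I n) h :
  fair_growth st.1.1 (proc_type rho succ A st h).1.1.
Proof.
case: st => [[ch r] kap] /=; apply: fair_growth_add_top => a b aA a_ch.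
by rewrite !inE aA a_ch andbT => /andP[_ /andP[hb _]] _ /subsetP; apply.
Qed.

Lemma fair_growth_hsteps fuel (st : hstate I n) R :
  fair_growth st.1.1 (hsteps rho succ A fuel st R).
Proof.
elim: fuel st R => [|fuel IH] [[ch r] kap] R /=; first exact: fair_growth_refl.
case: ifP => _; first exact: fair_growth_refl.
case: ifP => _.
  by apply: fair_growth_add_top => a b aA a_ch _ _ _; rewrite inE a_ch.
apply: fair_growth_trans (IH _ _).
apply: (@foldl_ind _ _ (fun st' => fair_growth ch st'.1.1)).
  exact: fair_growth_refl.
by move=> st' h fair_st'; apply: fair_growth_trans (fair_growth_proc_type _ _).
Qed.

Lemma hchoice_fair q kappa a b :
  a \in A -> a \notin hchoice rho succ A q kappa ->
  b \in hchoice rho succ A q kappa -> succ a b -> rho b \subset rho a -> False.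
Proof.
have [_ fair] : fair_growth set0 (hchoice rho succ A q kappa).
  rewrite /hchoice; case: ifP => _; last exact: fair_growth_hsteps (_, _, _) _.
  by rewrite -[top _ _ _]set0U; apply: fair_growth_add_top.
by move=> aA a_ch b_ch ab ba; have := fair a b aA a_ch b_ch ab ba; rewrite inE.
Qed.

End HierarchicalChoice.

Section AggregateChoice.
Variables (I S : finType) (n : nat) (rho : I -> {set 'I_n}) (succ : S -> rel I)
  (q : S -> pos -> nat) (kappa : S -> pos -> 'I_n -> nat).
Variables (s : S) (Y : {set contract I S}).
Hypothesis succ_tr : transitive (succ s).

Local Notation agg_state := ({set I} * {set contract I S})%type.
Local Notation step := (agg_step rho succ q kappa s Y).

Lemma agg_step_chosen_ci (st : agg_state) v :
  st.1 \subset (@ci I S) @: st.2 -> (step st v).1 \subset (@ci I S) @: (step st v).2.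
Proof.
case: st => [chI chX] /= chI_ci; rewrite imsetU; apply: setUSS => //.
by apply/subsetP=> i iC; apply/imsetP; exists (i, s, v); rewrite ?imset_f.
Qed.

Definition agg_fair_growth (st st' : agg_state) : Prop :=
  st.1 \subset st'.1 /\
  forall a y, (a, s, ct y) \in Y -> a \notin st'.1 -> y \in st'.2 ->
    succ s a (ci y) -> rho (ci y) \subset rho a -> y \in st.2.

Lemma agg_fair_growth_trans st1 st2 st3 :
  agg_fair_growth st1 st2 -> agg_fair_growth st2 st3 -> agg_fair_growth st1 st3.
Proof.
move=> [sub12 fair12] [sub23 fair23]; split; first exact: subset_trans sub23.
move=> a y aY a3 y3 ay ya; apply: (fair12 a y) => //; last exact: (fair23 a y).
by apply: contra a3; apply: (subsetP sub23).
Qed.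

Lemma agg_fair_growth_step (st : agg_state) v : agg_fair_growth st (step st v).
Proof.
case: st => [chI chX] /=; split=> [|a y aY]; first exact: subsetUl.
rewrite !in_setU negb_or => /andP[a_chI a_C] /orP[// | /imsetP[i iC y_def]] ai ia.
subst y; have aAv : a \in [set i | ((i, s, v) \in Y) && (i \notin chI)].
  by rewrite inE aY.
by case: (hchoice_fair succ_tr aAv a_C iC ai ia).
Qed.

Lemma Cagg_fair a y :
  (a, s, ct y) \in Y -> a \notin [set ci y | y in Cagg rho succ q kappa s Y] ->
  y \in Cagg rho succ q kappa s Y -> succ s a (ci y) ->
  rho (ci y) \subset rho a -> False.
Proof.
move=> aY a_C y_C ay ya.
have chosen_ci : (foldl step (set0, set0) cat_order).1 \subset
                 (@ci I S) @: (foldl step (set0, set0) cat_order).2.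
  apply: (@foldl_ind _ _ (fun st : agg_state => st.1 \subset (@ci I S) @: st.2)).
    exact: sub0set.
  exact: agg_step_chosen_ci.
have [_ fair] : agg_fair_growth (set0, set0) (foldl step (set0, set0) cat_order).
  apply: (@foldl_ind _ _ (agg_fair_growth (set0, set0))); first by split.
  by move=> st v fair_st; apply: agg_fair_growth_trans (agg_fair_growth_step _ _).
have a_st : a \notin (foldl step (set0, set0) cat_order).1.
  by apply: contra a_C; apply: (subsetP chosen_ci).
by have := fair a y aY a_st y_C ay ya; rewrite inE.
Qed.

End AggregateChoice.

Theorem theorem2 (I S : finType) (n : nat) (t : I -> option rcat)
  (rho : I -> {set 'I_n}) (succ : S -> rel I)
  (q : S -> pos -> nat) (kappa : S -> pos -> 'I_n -> nat) :
  (forall s, strict_ranking (succ s)) ->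
  hierarchical rho ->
  forall (s : S) (Y : {set contract I S}),
    Y \subset @contractX I S t ->
    forall x : contract I S, x \in Y -> cs x = s ->
      ci x \notin [set ci y | y in Cagg rho succ q kappa s Y] ->
      forall y, y \in Cagg rho succ q kappa s Y ->
        [\/ succ s (ci y) (ci x), ct x != ct y | rho (ci y) :\: rho (ci x) != set0].
Proof.
move=> ranking _ s Y _ x xY x_s x_C y y_C.
have [_ succ_tr succ_total] := ranking s.
have [yx | /negbTE yx] := boolP (succ s (ci y) (ci x)); first exact: Or31.
have [xy_ct | /negPn/eqP xy_ct] := boolP (ct x != ct y); first exact: Or32.
apply: Or33; rewrite setD_eq0; apply/negP => ya.
have xy_ci : ci x != ci y by apply: contraNneq x_C => ->; rewrite imset_f.
have xy : succ s (ci x) (ci y) by have := succ_total _ _ xy_ci; rewrite yx orbF.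
have xY' : (ci x, s, ct y) \in Y.
  by rewrite -x_s -xy_ct; have -> : (ci x, cs x, ct x) = x by case: (x) => [[]].
exact: (Cagg_fair succ_tr xY' x_C y_C xy ya).
Qed.
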